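(* Let $0<\beta<\frac13$ and let $S\subset\mathbb{R}$ be a Bernstein set. Then McMullen's absolute winning game with parameter $\beta$ and target set $S$ is not determined, i.e., neither Alice nor Bob has a winning strategy.
   Context: A Bernstein set is a set $S\subset\mathbb{R}$ that has nonempty intersection with every closed uncountable subset of $\mathbb{R}$ but contains no closed uncountable subset of $\mathbb{R}$. McMullen's absolute winning game with parameter $0<\beta<\frac13$ and target set $S$: Bob first chooses a compact interval $B_0$ of positive length. Alice then chooses an interval $A_0\subset B_0$ with $|A_0|=\beta|B_0|$. Bob then chooses a compact interval $B_1\subset B_0\setminus A_0$ with $|B_1|=\beta|B_0|$, and so on: for every $n\ge0$, $A_n\subset B_n$ with $|A_n|=\beta|B_n|$, and $B_{n+1}\subset B_n\setminus A_n$ with $|B_{n+1}|=\beta|B_n|$. Alice wins if $\bigcap_{n\ge0}B_n$ has nonempty intersection with $S$; otherwise Bob wins. Here $|I|$ denotes the length of an interval $I$. A strategy for a player is a rule specifying a legal move in every possible situation as a function of all previously chosen intervals; it is winning if it guarantees that player wins regardless of the opponent's moves. The game is determined on $S$ if one of the players has a winning strategy, and not determined otherwise. *)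

From Stdlib Require Import Reals List.
Import ListNotations.
Open Scope R_scope.

Definition closed_R (C : R -> Prop) : Prop :=
  forall x, (forall eps, 0 < eps -> exists y, C y /\ Rabs (y - x) < eps) -> C x.

(* countable = enumerated (possibly with repetitions) by a sequence; the empty
   set is countable *)
Definition countable_R (C : R -> Prop) : Prop :=
  exists f : nat -> R, forall x, C x -> exists n, f n = x.

Definition uncountable_R (C : R -> Prop) : Prop := ~ countable_R C.

Definition Bernstein (S : R -> Prop) : Prop :=
  (forall C, closed_R C -> uncountable_R C -> exists x, C x /\ S x) /\
  (forall C, closed_R C -> uncountable_R C -> ~ (forall x, C x -> S x)).

(* Bob's move: compact interval [a,b], encoded as (a,b). *)
Definition Bmove := (R * R)%type.
(* Alice's move: interval with endpoints c <= d; the booleans say whether the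
   left / right endpoint is included (so any kind of interval is allowed). *)
Definition Amove := (R * R * bool * bool)%type.

Definition inB (B : Bmove) (x : R) : Prop := fst B <= x <= snd B.
Definition lenB (B : Bmove) : R := snd B - fst B.

Definition inA (A : Amove) (x : R) : Prop :=
  match A with
  | (c, d, lc, rc) =>
      (if lc then c <= x else c < x) /\ (if rc then x <= d else x < d)
  end.
Definition lenA (A : Amove) : R :=
  match A with (c, d, _, _) => d - c end.
Definition wfA (A : Amove) : Prop :=
  match A with (c, d, _, _) => c <= d end.

(* A history is the list of completed rounds (B_i, A_i), in chronological order. *)
Definition history := list (Bmove * Amove).

Definition legalA (beta : R) (B : Bmove) (A : Amove) : Prop :=
  wfA A /\ (forall x, inA A x -> inB B x) /\ lenA A = beta * lenB B.

Definition legalB (beta : R) (h : history) (B : Bmove) : Prop :=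
  match rev h with
  | [] => fst B < snd B
  | (B', A') :: _ =>
      fst B <= snd B /\
      (forall x, inB B x -> inB B' x /\ ~ inA A' x) /\
      lenB B = beta * lenB B'
  end.

Definition dummyB : Bmove := (0, 0).
Definition dummyA : Amove := (0, 0, true, true).

Definition legal_history (beta : R) (h : history) : Prop :=
  forall n, (n < length h)%nat ->
    legalB beta (firstn n h) (fst (nth n h (dummyB, dummyA))) /\
    legalA beta (fst (nth n h (dummyB, dummyA))) (snd (nth n h (dummyB, dummyA))).

Definition AliceStrategy := history -> Bmove -> Amove.
Definition BobStrategy := history -> Bmove.

Definition legal_Alice_strategy (beta : R) (sigma : AliceStrategy) : Prop :=
  forall h B, legal_history beta h -> legalB beta h B -> legalA beta B (sigma h B).

Definition legal_Bob_strategy (beta : R) (tau : BobStrategy) : Prop :=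
  forall h, legal_history beta h -> legalB beta h (tau h).

Definition prefix (Bs : nat -> Bmove) (As : nat -> Amove) (n : nat) : history :=
  map (fun i => (Bs i, As i)) (seq 0 n).

Definition Alice_wins (S : R -> Prop) (Bs : nat -> Bmove) : Prop :=
  exists x, S x /\ forall n, inB (Bs n) x.

Definition Alice_has_winning_strategy (beta : R) (S : R -> Prop) : Prop :=
  exists sigma : AliceStrategy,
    legal_Alice_strategy beta sigma /\
    forall (Bs : nat -> Bmove) (As : nat -> Amove),
      (forall n, legalB beta (prefix Bs As n) (Bs n)) ->
      (forall n, As n = sigma (prefix Bs As n) (Bs n)) ->
      Alice_wins S Bs.

Definition Bob_has_winning_strategy (beta : R) (S : R -> Prop) : Prop :=
  exists tau : BobStrategy,
    legal_Bob_strategy beta tau /\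
    forall (Bs : nat -> Bmove) (As : nat -> Amove),
      (forall n, Bs n = tau (prefix Bs As n)) ->
      (forall n, legalA beta (Bs n) (As n)) ->
      ~ Alice_wins S Bs.

Definition determined (beta : R) (S : R -> Prop) : Prop :=
  Alice_has_winning_strategy beta S \/ Bob_has_winning_strategy beta S.

(* For a fixed strategy of either player, the plays consistent with it form a
   closed set of plays, and each such play can be split: some consistent play
   agrees with it up to any given round and later has a disjoint interval.
   A Cantor scheme of such splittings yields a closed uncountable set of outcomes
   of consistent plays.  Against Bob's strategy, Alice splits by playing exactly
   the interval Bob would choose next; by the Bernstein property one outcome lies
   in S, so the strategy is not winning.  Against Alice's strategy, a splitting
   exists because Alice cannot force a point p: Bob can make the relative
   position of p in his interval range over an interval of positions whose width
   grows by the factor 1/beta at each round.  Here one outcome lies outside S. *)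

From Stdlib Require Import Reals Lra Lia List Classical ClassicalEpsilon.
Import ListNotations.
Open Scope R_scope.

Record play := Play { bob : nat -> Bmove; alice : nat -> Amove }.

Definition hist (P : play) (k : nat) : history := prefix (bob P) (alice P) k.

Definition agree (P Q : play) (n : nat) : Prop :=
  forall i, (i <= n)%nat -> bob P i = bob Q i /\ alice P i = alice Q i.

Definition outcome (P : play) (x : R) : Prop := forall k, inB (bob P k) x.

Lemma hist_S P k : hist P (S k) = hist P k ++ [(bob P k, alice P k)].
Proof. unfold hist, prefix. rewrite seq_S, map_app. reflexivity. Qed.

Lemma length_hist P k : length (hist P k) = k.
Proof. unfold hist, prefix. rewrite length_map, length_seq. reflexivity. Qed.

Lemma nth_hist P k i d : (i < k)%nat -> nth i (hist P k) d = (bob P i, alice P i).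
Proof.
  intros Hi. unfold hist, prefix.
  rewrite nth_indep with (d' := (fun i => (bob P i, alice P i)) 0%nat)
    by (rewrite length_map, length_seq; lia).
  rewrite (map_nth (fun j => (bob P j, alice P j))), seq_nth by exact Hi. reflexivity.
Qed.

Lemma firstn_hist P k i : (i <= k)%nat -> firstn i (hist P k) = hist P i.
Proof.
  intros Hi. unfold hist, prefix. rewrite firstn_map. f_equal.
  replace k with (i + (k - i))%nat by lia. rewrite seq_app, firstn_app, length_seq.
  rewrite firstn_all2 by (rewrite length_seq; lia).
  replace (i - i)%nat with 0%nat by lia. apply app_nil_r.
Qed.

Lemma hist_agree P Q n k : agree P Q n -> (k <= S n)%nat -> hist P k = hist Q k.
Proof.
  intros HPQ Hk. unfold hist, prefix. apply map_ext_in. intros i Hi.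
  apply in_seq in Hi. destruct (HPQ i) as [-> ->]; [lia | reflexivity].
Qed.

Lemma agree_refl P n : agree P P n.
Proof. intros i _; split; reflexivity. Qed.

Lemma agree_trans P Q T n : agree P Q n -> agree Q T n -> agree P T n.
Proof. intros H1 H2 i Hi. destruct (H1 i Hi), (H2 i Hi). split; congruence. Qed.

Lemma agree_le P Q n m : (m <= n)%nat -> agree P Q n -> agree P Q m.
Proof. intros Hm H i Hi. apply H. lia. Qed.

Definition legal_reply (beta : R) (B : Bmove) (A : Amove) (B' : Bmove) : Prop :=
  fst B' <= snd B' /\ (forall x, inB B' x -> inB B x /\ ~ inA A x) /\
  lenB B' = beta * lenB B.

Lemma legalB_hist_0 beta P B : legalB beta (hist P 0) B <-> fst B < snd B.
Proof. reflexivity. Qed.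

Lemma legalB_hist_S beta P k B :
  legalB beta (hist P (S k)) B <-> legal_reply beta (bob P k) (alice P k) B.
Proof. unfold legalB. rewrite hist_S, rev_app_distr. reflexivity. Qed.

Definition roundwise (Rnd : history -> Bmove -> Amove -> Prop) (P : play) : Prop :=
  forall k, Rnd (hist P k) (bob P k) (alice P k).

Definition limit_closed (G : play -> Prop) : Prop :=
  forall P, (forall n, exists Q, G Q /\ agree P Q n) -> G P.

Lemma roundwise_closed Rnd : limit_closed (roundwise Rnd).
Proof.
  intros P H k. destruct (H k) as [Q [HQ HPQ]]. destruct (HPQ k (le_n k)) as [-> ->].
  rewrite (hist_agree P Q k k HPQ) by lia. apply HQ.
Qed.

Lemma limit_closed_and G1 G2 :
  limit_closed G1 -> limit_closed G2 -> limit_closed (fun P => G1 P /\ G2 P).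
Proof.
  intros H1 H2 P H. split; [apply H1 | apply H2]; intros n;
    destruct (H n) as [Q [HQ HPQ]]; exists Q; tauto.
Qed.

Definition legal_round (beta : R) (h : history) (B : Bmove) (A : Amove) : Prop :=
  legalB beta h B /\ legalA beta B A.

Definition legal_play (beta : R) : play -> Prop := roundwise (legal_round beta).

Definition follows_Bob (tau : BobStrategy) : play -> Prop :=
  roundwise (fun h B _ => B = tau h).

Definition follows_Alice (sigma : AliceStrategy) : play -> Prop :=
  roundwise (fun h B A => A = sigma h B).

Lemma legal_history_hist beta P k :
  legal_history beta (hist P k) <->
  forall i, (i < k)%nat -> legal_round beta (hist P i) (bob P i) (alice P i).
Proof.
  unfold legal_history, legal_round. rewrite length_hist.
  split; intros H i Hi; specialize (H i Hi);
    rewrite nth_hist, firstn_hist in * by lia; exact H.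
Qed.

Lemma legal_play_intro beta P :
  (forall k, legal_history beta (hist P k) -> legalB beta (hist P k) (bob P k)) ->
  (forall k, legal_history beta (hist P k) -> legalB beta (hist P k) (bob P k) ->
     legalA beta (bob P k) (alice P k)) ->
  legal_play beta P.
Proof.
  intros HB HA k. induction k as [k IH] using (well_founded_induction Wf_nat.lt_wf).
  assert (Hh : legal_history beta (hist P k)) by (apply legal_history_hist; exact IH).
  split; auto.
Qed.

Lemma lenB_pos_of_legal beta P k : 0 < beta ->
  (forall i, (i <= k)%nat -> legalB beta (hist P i) (bob P i)) -> 0 < lenB (bob P k).
Proof.
  intros Hb H. induction k as [|k IH].
  - pose proof (H 0%nat (le_n _)) as H0. apply legalB_hist_0 in H0. unfold lenB. lra.
  - pose proof (H (S k) (le_n _)) as HS. apply legalB_hist_S in HS.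
    destruct HS as [_ [_ ->]]. apply Rmult_lt_0_compat; auto.
Qed.

Definition disjointB (I J : Bmove) : Prop := forall x, inB I x -> ~ inB J x.

Lemma inB_dist B x y : inB B x -> inB B y -> Rabs (x - y) <= lenB B.
Proof. unfold inB, lenB. intros [] []. apply Rabs_le. lra. Qed.

Lemma nested_intervals (I : nat -> Bmove) :
  (forall k, fst (I k) <= snd (I k)) -> (forall k x, inB (I (S k)) x -> inB (I k) x) ->
  exists x, forall k, inB (I k) x.
Proof.
  intros Hle Hsub.
  assert (Hlo : forall i j, (i <= j)%nat -> fst (I i) <= fst (I j)).
  { intros i j Hij. induction Hij as [|j _ IH]; [lra|].
    destruct (Hsub j (fst (I (S j)))) as [H _]; [split; [lra | apply Hle]|]. lra. }
  assert (Hhi : forall i j, (i <= j)%nat -> snd (I j) <= snd (I i)).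
  { intros i j Hij. induction Hij as [|j _ IH]; [lra|].
    destruct (Hsub j (snd (I (S j)))) as [_ H]; [split; [apply Hle | lra]|]. lra. }
  assert (Hab : forall i j, fst (I i) <= snd (I j)).
  { intros i j. destruct (Nat.le_ge_cases i j) as [h|h].
    - specialize (Hlo i j h). specialize (Hle j). lra.
    - specialize (Hhi j i h). specialize (Hle i). lra. }
  destruct (completeness (fun r => exists i, r = fst (I i))) as [m [Hub Hlub]].
  - exists (snd (I 0%nat)). intros r [i ->]. apply Hab.
  - exists (fst (I 0%nat)), 0%nat. reflexivity.
  - exists m. intro k. split.
    + apply Hub. exists k. reflexivity.
    + apply Hlub. intros r [i ->]. apply Hab.
Qed.

Section LegalPlay.
Variable beta : R.
Variable P : play.
Hypothesis HP : legal_play beta P.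

Lemma legal_bob_le k : fst (bob P k) <= snd (bob P k).
Proof.
  destruct (HP k) as [H _]. destruct k as [|k].
  - apply legalB_hist_0 in H. lra.
  - apply legalB_hist_S in H. apply H.
Qed.

Lemma legal_reply_bob k : legal_reply beta (bob P k) (alice P k) (bob P (S k)).
Proof. apply legalB_hist_S, HP. Qed.

Lemma legal_bob_sub i j x : (i <= j)%nat -> inB (bob P j) x -> inB (bob P i) x.
Proof.
  intros Hij. induction Hij as [|j _ IH]; auto.
  intros Hx. apply IH, (legal_reply_bob j), Hx.
Qed.

Lemma legal_lenB k : lenB (bob P k) = beta ^ k * lenB (bob P 0).
Proof.
  induction k as [|k IH]; simpl; [ring|].
  destruct (legal_reply_bob k) as [_ [_ ->]]. rewrite IH. ring.
Qed.

Hypothesis beta_pos : 0 < beta.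
Hypothesis beta_lt_1 : beta < 1.

Lemma legal_lenB_pos k : 0 < lenB (bob P k).
Proof. apply (lenB_pos_of_legal beta P k beta_pos). intros i _. apply HP. Qed.

Lemma legal_lenB_small eps : 0 < eps -> exists N, forall k, (N <= k)%nat -> lenB (bob P k) < eps.
Proof.
  intros He. pose proof (legal_lenB_pos 0) as H0.
  destruct (pow_lt_1_zero beta) with (y := eps / lenB (bob P 0)) as [N HN].
  - rewrite Rabs_pos_eq; lra.
  - apply Rdiv_lt_0_compat; lra.
  - exists N. intros k Hk. specialize (HN k Hk).
    rewrite Rabs_pos_eq in HN by (apply pow_le; lra).
    rewrite legal_lenB.
    apply Rmult_lt_compat_r with (r := lenB (bob P 0)) in HN; [|lra].
    unfold Rdiv in HN. rewrite Rmult_assoc, Rinv_l in HN by lra. lra.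
Qed.

Lemma legal_outcome_exists : exists x, outcome P x.
Proof.
  apply nested_intervals; [apply legal_bob_le|]. intros k x. apply legal_bob_sub. lia.
Qed.

Lemma legal_outcome_unique x y : outcome P x -> outcome P y -> x = y.
Proof.
  intros Hx Hy. apply NNPP. intros Hne.
  assert (Hd : 0 < Rabs (x - y)) by (apply Rabs_pos_lt; lra).
  destruct (legal_lenB_small _ Hd) as [N HN].
  pose proof (inB_dist _ x y (Hx N) (Hy N)). specialize (HN N (le_n _)). lra.
Qed.

Lemma legal_eventually_disjoint x B : outcome P x -> ~ inB B x ->
  exists N, forall k, (N <= k)%nat -> disjointB (bob P k) B.
Proof.
  intros Hx HB.
  assert (Heps : exists eps, 0 < eps /\ forall y, inB B y -> eps <= Rabs (y - x)).
  { unfold inB in HB. destruct (Rlt_or_le x (fst B)) as [h|h].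
    - exists (fst B - x). split; [lra|]. intros y [Hy _]. rewrite Rabs_pos_eq; lra.
    - assert (snd B < x) by (apply Rnot_le_lt; intro; apply HB; auto).
      exists (x - snd B). split; [lra|]. intros y [_ Hy]. rewrite Rabs_left; lra. }
  destruct Heps as [eps [He Hfar]]. destruct (legal_lenB_small eps He) as [N HN].
  exists N. intros k Hk y Hy HyB.
  pose proof (inB_dist _ y x Hy (Hx k)). specialize (HN k Hk). specialize (Hfar y HyB). lra.
Qed.

End LegalPlay.

Fixpoint run_hist (b : history -> Bmove) (a : history -> Bmove -> Amove) (k : nat) : history :=
  match k with
  | O => []
  | S k => let h := run_hist b a k in h ++ [(b h, a h (b h))]
  end.

Definition run (b : history -> Bmove) (a : history -> Bmove -> Amove) : play :=
  Play (fun k => b (run_hist b a k)) (fun k => a (run_hist b a k) (b (run_hist b a k))).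

Lemma hist_run b a k : hist (run b a) k = run_hist b a k.
Proof. induction k as [|k IH]; [reflexivity|]. rewrite hist_S, IH. reflexivity. Qed.

Lemma run_bob b a k : bob (run b a) k = b (hist (run b a) k).
Proof. rewrite hist_run. reflexivity. Qed.

Lemma run_alice b a k : alice (run b a) k = a (hist (run b a) k) (bob (run b a) k).
Proof. rewrite hist_run. reflexivity. Qed.

Lemma run_agree P b a n :
  (forall k, (k <= n)%nat -> b (hist P k) = bob P k /\ a (hist P k) (bob P k) = alice P k) ->
  agree P (run b a) n.
Proof.
  intros H.
  assert (Hround : forall k, (k <= n)%nat -> hist (run b a) k = hist P k ->
            bob P k = bob (run b a) k /\ alice P k = alice (run b a) k).
  { intros k Hk Hh. rewrite run_alice, run_bob, Hh.
    destruct (H k Hk) as [-> ->]. split; reflexivity. }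
  assert (Hhist : forall k, (k <= S n)%nat -> hist (run b a) k = hist P k).
  { induction k as [|k IH]; intros Hk; [reflexivity|].
    rewrite !hist_S, IH by lia.
    destruct (Hround k ltac:(lia) (IH ltac:(lia))) as [<- <-]. reflexivity. }
  intros i Hi. apply Hround; auto.
Qed.

Definition copy_Bob (P : play) (n : nat) (b : history -> Bmove) (h : history) : Bmove :=
  if (length h <=? n)%nat then bob P (length h) else b h.

Definition copy_Alice (P : play) (n : nat) (a : history -> Bmove -> Amove)
    (h : history) (B : Bmove) : Amove :=
  if (length h <=? n)%nat then alice P (length h) else a h B.

Lemma copy_Bob_early P n b Q k : (k <= n)%nat -> copy_Bob P n b (hist Q k) = bob P k.
Proof.
  intros Hk. unfold copy_Bob. rewrite length_hist.
  apply Nat.leb_le in Hk. rewrite Hk. reflexivity.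
Qed.

Lemma copy_Bob_late P n b Q k : (n < k)%nat -> copy_Bob P n b (hist Q k) = b (hist Q k).
Proof.
  intros Hk. unfold copy_Bob. rewrite length_hist.
  apply Nat.leb_gt in Hk. rewrite Hk. reflexivity.
Qed.

Lemma copy_Alice_early P n a Q k B :
  (k <= n)%nat -> copy_Alice P n a (hist Q k) B = alice P k.
Proof.
  intros Hk. unfold copy_Alice. rewrite length_hist.
  apply Nat.leb_le in Hk. rewrite Hk. reflexivity.
Qed.

Lemma copy_Alice_late P n a Q k B :
  (n < k)%nat -> copy_Alice P n a (hist Q k) B = a (hist Q k) B.
Proof.
  intros Hk. unfold copy_Alice. rewrite length_hist.
  apply Nat.leb_gt in Hk. rewrite Hk. reflexivity.
Qed.

Definition Alo (A : Amove) : R := match A with (c, _, _, _) => c end.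
Definition Ahi (A : Amove) : R := match A with (_, d, _, _) => d end.

Lemma inA_bounds A x : inA A x -> Alo A <= x <= Ahi A.
Proof. destruct A as [[[c d] [|]] [|]]; simpl; lra. Qed.

Lemma legalA_Ahi beta B A : legalA beta B A -> Ahi A = Alo A + beta * lenB B.
Proof. intros [_ [_ HL]]. destruct A as [[[c d] lc] rc]. simpl in *. lra. Qed.

Lemma legalB_le beta h B : legalB beta h B -> fst B <= snd B.
Proof. unfold legalB. destruct (rev h) as [|[B' A'] t]; intros H; [lra | apply H]. Qed.

Definition full_Alice_move (B : Bmove) : Amove := (fst B, snd B, true, true).

Lemma full_Alice_move_legal beta B A Z :
  legal_reply beta B A Z -> legalA beta B (full_Alice_move Z).
Proof.
  intros [HZ [Hsub HL]]. split; [exact HZ|]. split; [|exact HL].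
  intros x Hx. apply Hsub, Hx.
Qed.

Definition left_Alice_move (beta : R) (B : Bmove) : Amove :=
  (fst B, fst B + beta * lenB B, true, true).

Lemma left_Alice_move_legal beta B :
  0 < beta < 1 -> fst B <= snd B -> legalA beta B (left_Alice_move beta B).
Proof.
  intros Hb HB. unfold legalA, left_Alice_move, wfA, lenA, lenB, inB. simpl.
  assert (0 <= beta * (snd B - fst B) <= snd B - fst B) by (split; nra).
  split; [lra|]. split; [|ring]. intros x [Hx1 Hx2]. lra.
Qed.

Lemma reply_legal beta B A t : 0 < beta -> fst B < snd B -> legalA beta B A ->
  fst B <= t -> t + beta * lenB B <= snd B ->
  Ahi A < t \/ t + beta * lenB B < Alo A ->
  legal_reply beta B A (t, t + beta * lenB B).
Proof.
  intros Hb HB HA Ht1 Ht2 Hav.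
  assert (0 < beta * lenB B) by (unfold lenB; apply Rmult_lt_0_compat; lra).
  split; [simpl; lra|]. split; [|unfold lenB; simpl; ring].
  intros x [Hx1 Hx2]. simpl in Hx1, Hx2. split; [split; lra|].
  intros HxA. apply inA_bounds in HxA. lra.
Qed.

Definition escape (beta : R) (B : Bmove) (A : Amove) : Bmove :=
  if Rlt_dec (fst B + beta * lenB B) (Alo A) then (fst B, fst B + beta * lenB B)
  else (snd B - beta * lenB B, snd B - beta * lenB B + beta * lenB B).

Lemma escape_legal beta B A :
  0 < beta < 1/3 -> fst B < snd B -> legalA beta B A -> legal_reply beta B A (escape beta B A).
Proof.
  intros Hb HB HA. pose proof (legalA_Ahi beta B A HA) as Hd.
  assert (HL : 0 < lenB B) by (unfold lenB; lra).
  assert (0 < beta * lenB B < lenB B / 3) by (split; nra).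
  unfold escape. destruct Rlt_dec; apply reply_legal; auto; unfold lenB in *; lra.
Qed.

Definition default_Bob (beta : R) (h : history) : Bmove :=
  match rev h with [] => (0, 1) | (B, A) :: _ => escape beta B A end.

Lemma default_Bob_legal beta P k : 0 < beta < 1/3 ->
  legal_history beta (hist P k) -> legalB beta (hist P k) (default_Bob beta (hist P k)).
Proof.
  intros Hb Hh. rewrite legal_history_hist in Hh. destruct k as [|k].
  - apply legalB_hist_0. simpl. lra.
  - replace (default_Bob beta (hist P (S k))) with (escape beta (bob P k) (alice P k))
      by (unfold default_Bob; rewrite hist_S, rev_app_distr; reflexivity).
    destruct (Hh k) as [_ HA]; [lia|].
    apply (legalB_hist_S beta P k), escape_legal; [exact Hb| |exact HA].
    enough (0 < lenB (bob P k)) by (unfold lenB in *; lra).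
    apply (lenB_pos_of_legal beta); [lra|]. intros i Hi. apply (Hh i). lia.
Qed.

(* Alice's interval has length [beta L] and [3 beta L + 4 delta = L], so it cannot
   meet both families. *)
Lemma escape_families beta B A :
  0 < beta < 1/3 -> fst B < snd B -> legalA beta B A ->
  let delta := (1 - 3 * beta) * lenB B / 4 in
  (forall t, fst B <= t <= fst B + delta -> legal_reply beta B A (t, t + beta * lenB B)) \/
  (forall t, snd B - beta * lenB B - delta <= t <= snd B - beta * lenB B ->
     legal_reply beta B A (t, t + beta * lenB B)).
Proof.
  intros Hb HB HA delta. pose proof (legalA_Ahi beta B A HA) as Hd.
  assert (HL : 0 < lenB B) by (unfold lenB; lra).
  assert (0 < beta * lenB B) by (apply Rmult_lt_0_compat; lra).
  assert (0 < delta) by (unfold delta; nra).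
  assert (lenB B = 3 * (beta * lenB B) + 4 * delta) by (unfold delta; field).
  destruct (Rlt_or_le (fst B + beta * lenB B + delta) (Alo A)) as [h|h];
    [left | right]; intros t Ht; apply reply_legal; auto; unfold lenB in *; lra.
Qed.

Lemma closed_inB B : closed_R (inB B).
Proof.
  intros x H. split.
  - destruct (Rle_or_lt (fst B) x) as [h|h]; [exact h|].
    destruct (H (fst B - x)) as [y [[Hy _] Hxy]]; [lra|]. apply Rabs_def2 in Hxy. lra.
  - destruct (Rle_or_lt x (snd B)) as [h|h]; [exact h|].
    destruct (H (x - snd B)) as [y [[_ Hy] Hxy]]; [lra|]. apply Rabs_def2 in Hxy. lra.
Qed.

Lemma closed_R_far C x : closed_R C -> ~ C x ->
  exists eps, 0 < eps /\ forall y, C y -> eps <= Rabs (y - x).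
Proof.
  intros HC Hx. apply NNPP. intros Hnone. apply Hx, HC. intros eps He.
  apply NNPP. intros Hfar. apply Hnone. exists eps. split; [exact He|].
  intros y Hy. apply Rnot_lt_le. intros Hlt. apply Hfar. exists y. auto.
Qed.

Lemma closed_or C1 C2 : closed_R C1 -> closed_R C2 -> closed_R (fun x => C1 x \/ C2 x).
Proof.
  intros H1 H2 x H. apply NNPP. intros Hn.
  destruct (closed_R_far C1 x H1) as [e1 [He1 Hy1]]; [tauto|].
  destruct (closed_R_far C2 x H2) as [e2 [He2 Hy2]]; [tauto|].
  destruct (H (Rmin e1 e2)) as [y [[Hy|Hy] Hd]]; [apply Rmin_pos; lra| |].
  - specialize (Hy1 y Hy). pose proof (Rmin_l e1 e2). lra.
  - specialize (Hy2 y Hy). pose proof (Rmin_r e1 e2). lra.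
Qed.

Definition dummy_play : play := Play (fun _ => dummyB) (fun _ => dummyA).

Section CantorScheme.
Variable beta : R.
Variable Good : play -> Prop.
Hypothesis Good_legal : forall P, Good P -> legal_play beta P.
Hypothesis Good_closed : limit_closed Good.
Hypothesis Good_inhabited : exists P, Good P.
Hypothesis Good_split : forall P n, Good P ->
  exists Q m, (n < m)%nat /\ Good Q /\ agree P Q n /\ disjointB (bob P m) (bob Q m).

Definition node := (play * nat)%type.
Definition node_interval (N : node) : Bmove := bob (fst N) (snd N).
Definition good_node (N : node) : Prop := Good (fst N).

Definition split_spec (N Q : node) : Prop :=
  good_node N -> (snd N < snd Q)%nat /\ Good (fst Q) /\ agree (fst N) (fst Q) (snd N) /\
    disjointB (bob (fst N) (snd Q)) (node_interval Q).

Definition split_node (N : node) : node := epsilon (inhabits (dummy_play, 0%nat)) (split_spec N).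

Definition child (b : bool) (N : node) : node :=
  if b then (fst N, snd (split_node N)) else split_node N.

Lemma split_node_spec N : split_spec N (split_node N).
Proof.
  unfold split_node. apply epsilon_spec. destruct (classic (good_node N)) as [HN|HN].
  - destruct (Good_split (fst N) (snd N) HN) as [Q [m HQ]]. exists (Q, m). intros _. exact HQ.
  - exists (dummy_play, 0%nat). intros HN'. contradiction.
Qed.

Lemma child_good b N : good_node N -> good_node (child b N).
Proof. intros HN. destruct (split_node_spec N HN) as [_ [HQ _]]. destruct b; assumption. Qed.

Lemma child_extends b N : good_node N ->
  (snd N < snd (child b N))%nat /\ agree (fst N) (fst (child b N)) (snd N).
Proof.
  intros HN. destruct (split_node_spec N HN) as [Hlt [_ [HPQ _]]].
  destruct b; simpl; auto using agree_refl.
Qed.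

Lemma child_sub b N x : good_node N -> inB (node_interval (child b N)) x -> inB (node_interval N) x.
Proof.
  intros HN Hx. destruct (child_extends b N HN) as [Hlt HPC].
  unfold node_interval in *. destruct (HPC (snd N) (le_n _)) as [-> _].
  apply (legal_bob_sub beta _ (Good_legal _ (child_good b N HN)) _ (snd (child b N)));
    [lia | exact Hx].
Qed.

Lemma children_disjoint N : good_node N ->
  disjointB (node_interval (child true N)) (node_interval (child false N)).
Proof. intros HN. apply (split_node_spec N HN). Qed.

Fixpoint level (N : node) (k : nat) : R -> Prop :=
  match k with
  | O => inB (node_interval N)
  | S k => fun x => level (child true N) k x \/ level (child false N) k x
  end.

Lemma level_sub k : forall N x, good_node N -> level N k x -> inB (node_interval N) x.
Proof.
  induction k as [|k IH]; intros N x HN Hx; [exact Hx|].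
  destruct Hx as [Hx|Hx]; eapply child_sub; try exact HN; exact (IH _ _ (child_good _ _ HN) Hx).
Qed.

Lemma level_S k : forall N x, good_node N -> level N (S k) x -> level N k x.
Proof.
  induction k as [|k IH]; intros N x HN Hx.
  - destruct Hx as [Hx|Hx]; eapply child_sub; try exact HN; exact Hx.
  - destruct Hx as [Hx|Hx]; [left | right]; exact (IH _ _ (child_good _ _ HN) Hx).
Qed.

Lemma level_le N x k k' : good_node N -> (k <= k')%nat -> level N k' x -> level N k x.
Proof. intros HN Hk. induction Hk; auto. intros Hx. apply IHHk, level_S; auto. Qed.

Lemma level_closed k : forall N, closed_R (level N k).
Proof. induction k as [|k IH]; intros N; [apply closed_inB | apply closed_or; apply IH]. Qed.

Definition root : node := (epsilon (inhabits dummy_play) Good, 0%nat).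

Lemma root_good : good_node root.
Proof. unfold good_node, root. apply epsilon_spec, Good_inhabited. Qed.

Definition cantor_set (x : R) : Prop := forall k, level root k x.

Lemma cantor_set_closed : closed_R cantor_set.
Proof.
  intros x H k. apply level_closed. intros eps He.
  destruct (H eps He) as [y [Hy Hxy]]. exists y. auto.
Qed.

Fixpoint descend (choose : nat -> node -> bool) (k : nat) : node :=
  match k with
  | O => root
  | S k => child (choose k (descend choose k)) (descend choose k)
  end.

Section Descend.
Variable choose : nat -> node -> bool.

Lemma descend_good k : good_node (descend choose k).
Proof. induction k; [apply root_good | apply child_good; auto]. Qed.

Lemma descend_agree i j : (i <= j)%nat ->
  (snd (descend choose i) <= snd (descend choose j))%nat /\
  agree (fst (descend choose i)) (fst (descend choose j)) (snd (descend choose i)).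
Proof.
  intros Hij. induction Hij as [|j _ [Hle IH]]; [split; [lia | apply agree_refl]|].
  destruct (child_extends (choose j (descend choose j)) _ (descend_good j)) as [Hlt Hag].
  split; [simpl; lia|]. eapply agree_trans; [exact IH|]. eapply agree_le; [exact Hle | exact Hag].
Qed.

Lemma descend_sub k x : inB (node_interval (descend choose (S k))) x ->
  inB (node_interval (descend choose k)) x.
Proof. apply child_sub, descend_good. Qed.

Lemma descend_level j k x : inB (node_interval (descend choose (j + k))) x ->
  level (descend choose j) k x.
Proof.
  revert j. induction k as [|k IH]; intros j Hx; simpl.
  - rewrite Nat.add_0_r in Hx. exact Hx.
  - replace (j + S k)%nat with (S j + k)%nat in Hx by lia.
    specialize (IH (S j) Hx). simpl in IH. destruct (choose j _); auto.
Qed.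

(* The diagonal play takes its [k]-th round from the [k]-th node, whose play is
   stable from then on. *)
Lemma descend_outcome x : (forall k, inB (node_interval (descend choose k)) x) ->
  exists Q, Good Q /\ outcome Q x.
Proof.
  intros Hx.
  assert (Hround : forall k, (k <= snd (descend choose k))%nat).
  { induction k as [|k IH]; [lia|].
    destruct (descend_agree k (S k)) as [Hle _]; [lia|].
    destruct (child_extends (choose k (descend choose k)) _ (descend_good k)) as [Hlt _].
    simpl in *. lia. }
  set (Q := Play (fun i => bob (fst (descend choose i)) i)
                 (fun i => alice (fst (descend choose i)) i)).
  assert (HQ : forall k, agree Q (fst (descend choose k)) k).
  { intros k i Hi. destruct (descend_agree i k Hi) as [_ H]. apply H, Hround. }
  exists Q. split.
  - apply Good_closed. intros k. exists (fst (descend choose k)).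
    split; [apply descend_good | apply HQ].
  - intros i.
    apply (legal_bob_sub beta _ (Good_legal _ (descend_good i)) i (snd (descend choose i)));
      [apply Hround | apply Hx].
Qed.

End Descend.

Definition toward (x : R) (k : nat) (N : node) : bool :=
  if excluded_middle_informative (forall j, level (child true N) j x) then true else false.

Lemma toward_level x : cantor_set x -> forall k j, level (descend (toward x) k) j x.
Proof.
  intros Hx k. induction k as [|k IH]; [exact Hx|].
  simpl. unfold toward at 1.
  destruct excluded_middle_informative as [h|h]; [exact h|].
  apply not_all_ex_not in h. destruct h as [j0 Hj0]. intros j.
  pose proof (descend_good (toward x) k) as HN.
  destruct (IH (S (max j j0))) as [H|H].
  - exfalso. apply Hj0. eapply level_le; [apply child_good; exact HN | | exact H]. lia.
  - eapply level_le; [apply child_good; exact HN | | exact H]. lia.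
Qed.

Lemma cantor_set_outcome x : cantor_set x -> exists Q, Good Q /\ outcome Q x.
Proof.
  intros Hx. apply (descend_outcome (toward x)). intros k.
  apply (level_sub 0); [apply descend_good | apply toward_level; exact Hx].
Qed.

Definition away (f : nat -> R) (k : nat) (N : node) : bool :=
  if excluded_middle_informative (inB (node_interval (child true N)) (f k)) then false else true.

Lemma cantor_set_uncountable : uncountable_R cantor_set.
Proof.
  intros [f Hf].
  destruct (nested_intervals (fun k => node_interval (descend (away f) k))) as [x Hx].
  - intros k. apply (legal_bob_le beta), Good_legal, descend_good.
  - apply descend_sub.
  - destruct (Hf x) as [n <-].
    { intros k. apply (descend_level (away f) 0). apply Hx. }
    specialize (Hx (S n)). simpl in Hx. unfold away at 1 in Hx.
    destruct excluded_middle_informative as [h|h]; [|exact (h Hx)].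
    exact (children_disjoint _ (descend_good (away f) n) _ h Hx).
Qed.

Theorem good_outcomes_perfect : exists C, closed_R C /\ uncountable_R C /\
  forall x, C x -> exists Q, Good Q /\ outcome Q x.
Proof.
  exists cantor_set. split; [apply cantor_set_closed|].
  split; [apply cantor_set_uncountable | apply cantor_set_outcome].
Qed.

End CantorScheme.

Section BobStrategy.
Variable beta : R.
Hypothesis beta_range : 0 < beta < 1/3.
Variable tau : BobStrategy.
Hypothesis tau_legal : legal_Bob_strategy beta tau.

Definition tau_play (P : play) : Prop := legal_play beta P /\ follows_Bob tau P.

Lemma tau_play_closed : limit_closed tau_play.
Proof. apply limit_closed_and; apply roundwise_closed. Qed.

Lemma tau_run a :
  (forall k, legalB beta (hist (run tau a) k) (bob (run tau a) k) ->
     legalA beta (bob (run tau a) k) (alice (run tau a) k)) ->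
  tau_play (run tau a).
Proof.
  intros Ha. split; [|intros k; apply run_bob].
  apply legal_play_intro; [|auto]. intros k Hh. rewrite run_bob. apply tau_legal, Hh.
Qed.

Lemma tau_play_inhabited : exists P, tau_play P.
Proof.
  exists (run tau (fun _ B => left_Alice_move beta B)). apply tau_run. intros k HB.
  apply left_Alice_move_legal; [lra | eapply legalB_le; exact HB].
Qed.

(* Alice copies [P] up to round [n] and then blocks the interval that Bob chose at
   round [n + 2] of [P], so Bob's answer at that round must differ. *)
Lemma tau_play_split P n : tau_play P ->
  exists Q m, (n < m)%nat /\ tau_play Q /\ agree P Q n /\ disjointB (bob P m) (bob Q m).
Proof.
  intros [HPl HPf].
  set (Z := bob P (S (S n))).
  set (a := copy_Alice P n (fun h B =>
              if (length h =? S n)%nat then full_Alice_move Z else left_Alice_move beta B)).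
  set (Q := run tau a).
  assert (HPQ : agree P Q n).
  { apply run_agree. intros k Hk. split; [symmetry; apply HPf|].
    unfold a. apply copy_Alice_early. exact Hk. }
  assert (HQbob : bob Q (S n) = bob P (S n)).
  { unfold Q. rewrite run_bob, HPf. f_equal. symmetry. apply (hist_agree P Q n); auto. }
  assert (HQalice : forall k, (n < k)%nat -> alice Q k =
            if (k =? S n)%nat then full_Alice_move Z else left_Alice_move beta (bob Q k)).
  { intros k Hk. unfold Q. rewrite run_alice. unfold a.
    rewrite copy_Alice_late, length_hist by exact Hk. reflexivity. }
  exists Q, (S (S n)). split; [lia|].
  assert (HQ : tau_play Q).
  { apply tau_run. fold Q. intros k HB.
    destruct (Compare_dec.le_lt_dec k n) as [Hk|Hk].
    - destruct (HPQ k Hk) as [<- <-]. apply HPl.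
    - rewrite HQalice by exact Hk. destruct (Nat.eqb_spec k (S n)) as [->|Hne].
      + rewrite HQbob. apply (full_Alice_move_legal beta _ (alice P (S n))), legal_reply_bob, HPl.
      + apply left_Alice_move_legal; [lra | eapply legalB_le; exact HB]. }
  split; [exact HQ|]. split; [exact HPQ|].
  intros x HxP HxQ.
  destruct (legal_reply_bob beta Q (proj1 HQ) (S n)) as [_ [Havoid _]].
  apply (proj2 (Havoid x HxQ)). rewrite HQalice, Nat.eqb_refl by lia. exact HxP.
Qed.

End BobStrategy.

Lemma Bob_not_winning beta S :
  0 < beta < 1/3 -> Bernstein S -> ~ Bob_has_winning_strategy beta S.
Proof.
  intros Hb [Hmeet _] [tau [Htau Hwin]].
  destruct (good_outcomes_perfect beta (tau_play beta tau) (fun P HP => proj1 HP)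
              (tau_play_closed beta tau) (tau_play_inhabited beta Hb tau Htau)
              (tau_play_split beta Hb tau Htau)) as [C [HC [HCu HCout]]].
  destruct (Hmeet C HC HCu) as [x [Cx Sx]].
  destruct (HCout x Cx) as [Q [[HQl HQf] HQx]].
  apply (Hwin (bob Q) (alice Q) HQf (fun k => proj2 (HQl k))). exists x. auto.
Qed.

Section AliceStrategy.
Variable beta : R.
Hypothesis beta_range : 0 < beta < 1/3.
Variable sigma : AliceStrategy.
Hypothesis sigma_legal : legal_Alice_strategy beta sigma.

Definition sigma_play (P : play) : Prop := legal_play beta P /\ follows_Alice sigma P.

Lemma sigma_play_closed : limit_closed sigma_play.
Proof. apply limit_closed_and; apply roundwise_closed. Qed.

Lemma sigma_run b :
  (forall k, legal_history beta (hist (run b sigma) k) ->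
     legalB beta (hist (run b sigma) k) (bob (run b sigma) k)) ->
  sigma_play (run b sigma).
Proof.
  intros Hb. split; [|intros k; apply run_alice].
  apply legal_play_intro; [exact Hb|]. intros k Hh HB.
  rewrite run_alice. apply sigma_legal; assumption.
Qed.

Lemma sigma_play_inhabited : exists P, sigma_play P.
Proof.
  exists (run (default_Bob beta) sigma). apply sigma_run. intros k Hh.
  rewrite run_bob. apply default_Bob_legal; assumption.
Qed.

Lemma sigma_play_redirect P m B : sigma_play P -> legalB beta (hist P (S m)) B ->
  exists Q, sigma_play Q /\ agree P Q m /\ bob Q (S m) = B.
Proof.
  intros [HPl HPf] HB.
  set (b := copy_Bob P m (fun h => if (length h =? S m)%nat then B else default_Bob beta h)).
  set (Q := run b sigma).
  assert (HPQ : agree P Q m).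
  { apply run_agree. intros k Hk. split; [apply copy_Bob_early; exact Hk | symmetry; apply HPf]. }
  assert (Hhist : hist Q (S m) = hist P (S m)) by (symmetry; apply (hist_agree P Q m); auto).
  assert (HQbob : forall k, (m < k)%nat ->
            bob Q k = if (k =? S m)%nat then B else default_Bob beta (hist Q k)).
  { intros k Hk. unfold Q. rewrite run_bob. unfold b.
    rewrite copy_Bob_late, length_hist by exact Hk. reflexivity. }
  exists Q. split; [|split; [exact HPQ | rewrite HQbob, Nat.eqb_refl by lia; reflexivity]].
  apply sigma_run. fold Q. intros k Hh.
  destruct (Compare_dec.le_lt_dec k m) as [Hk|Hk].
  - rewrite <- (hist_agree P Q m k HPQ) by lia. destruct (HPQ k Hk) as [<- _]. apply HPl.
  - rewrite HQbob by exact Hk. destruct (Nat.eqb_spec k (S m)) as [->|Hne].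
    + rewrite Hhist. exact HB.
    + apply default_Bob_legal; assumption.
Qed.

(* Assuming every continuation of [P] after round [n] has outcome [p], every
   relative position [q] of [p] that Bob can reach lies within [beta] of an end of
   his interval, and zooming into that end maps [q] to [q / beta] or
   [(q - 1 + beta) / beta]. *)
Section Pinned.
Variable P : play.
Hypothesis HP : sigma_play P.
Variable n : nat.
Variable p : R.
Hypothesis pinned : forall Q, sigma_play Q -> agree P Q n -> outcome Q p.

Definition rel_pos (Q : play) (m : nat) : R := (p - fst (bob Q m)) / lenB (bob Q m).

Definition reachable (q : R) : Prop :=
  exists Q m, sigma_play Q /\ agree P Q n /\ (n <= m)%nat /\ q = rel_pos Q m.

Lemma rel_pos_spec Q m : sigma_play Q ->
  0 < lenB (bob Q m) /\ rel_pos Q m * lenB (bob Q m) = p - fst (bob Q m).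
Proof.
  intros [HQl _]. pose proof (legal_lenB_pos beta Q HQl (proj1 beta_range) m) as HL.
  split; [exact HL|]. unfold rel_pos. field. lra.
Qed.

Lemma reachable_unit q : reachable q -> 0 <= q <= 1.
Proof.
  intros [Q [m [HQ [HPQ [_ ->]]]]]. destruct (rel_pos_spec Q m HQ) as [HL Hq].
  destruct (pinned Q HQ HPQ m) as [Hp1 Hp2]. unfold lenB in *. split; nra.
Qed.

Lemma reachable_reply Q m t : sigma_play Q -> agree P Q n -> (n <= m)%nat ->
  legal_reply beta (bob Q m) (alice Q m) (t, t + beta * lenB (bob Q m)) ->
  t <= p <= t + beta * lenB (bob Q m) /\ reachable ((p - t) / (beta * lenB (bob Q m))).
Proof.
  intros HQ HPQ Hm Hrep.
  destruct (sigma_play_redirect Q m _ HQ (proj2 (legalB_hist_S beta Q m _) Hrep))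
    as [Q' [HQ' [HQQ' HB]]].
  assert (HPQ' : agree P Q' n) by (eapply agree_trans; [exact HPQ | eapply agree_le; eauto]).
  split.
  - pose proof (pinned Q' HQ' HPQ' (S m)) as Hp. rewrite HB in Hp. exact Hp.
  - exists Q', (S m). split; [exact HQ'|]. split; [exact HPQ'|]. split; [lia|].
    unfold rel_pos. rewrite HB. unfold lenB. simpl. f_equal. ring.
Qed.

Lemma pinned_families Q m : sigma_play Q -> agree P Q n -> (n <= m)%nat ->
  let L := lenB (bob Q m) in let delta := (1 - 3 * beta) * L / 4 in
  (rel_pos Q m <= beta /\ forall t, fst (bob Q m) <= t <= fst (bob Q m) + delta ->
     reachable ((p - t) / (beta * L))) \/
  (1 - beta <= rel_pos Q m /\
   forall t, snd (bob Q m) - beta * L - delta <= t <= snd (bob Q m) - beta * L ->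
     reachable ((p - t) / (beta * L))).
Proof.
  intros HQ HPQ Hm. cbv zeta. destruct (rel_pos_spec Q m HQ) as [HL Hq].
  assert (HBm : fst (bob Q m) < snd (bob Q m)) by (unfold lenB in HL; lra).
  assert (0 < (1 - 3 * beta) * lenB (bob Q m) / 4) by nra.
  destruct (escape_families beta (bob Q m) (alice Q m) beta_range HBm (proj2 (proj1 HQ m)))
    as [Hleft|Hright]; [left | right]; (split; [|intros t Ht; apply (reachable_reply Q m t); auto]).
  - destruct (reachable_reply Q m (fst (bob Q m)) HQ HPQ Hm) as [[_ Hp] _];
      [apply Hleft; lra | nra].
  - destruct (reachable_reply Q m (snd (bob Q m) - beta * lenB (bob Q m)) HQ HPQ Hm) as [[Hp _] _];
      [apply Hright; lra | unfold lenB in *; nra].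
Qed.

Lemma reachable_not_middle q : reachable q -> beta < q < 1 - beta -> False.
Proof.
  intros [Q [m [HQ [HPQ [Hm ->]]]]] Hq.
  destruct (pinned_families Q m HQ HPQ Hm) as [[H _]|[H _]]; lra.
Qed.

Lemma reachable_left q : reachable q -> q <= beta -> reachable (q / beta).
Proof.
  intros [Q [m [HQ [HPQ [Hm ->]]]]] Hq. destruct (rel_pos_spec Q m HQ) as [HL _].
  destruct (pinned_families Q m HQ HPQ Hm) as [[_ Hfam]|[H _]]; [|lra].
  replace (rel_pos Q m / beta) with ((p - fst (bob Q m)) / (beta * lenB (bob Q m)))
    by (unfold rel_pos; field; lra).
  apply Hfam. split; [lra|]. assert (0 <= (1 - 3 * beta) * lenB (bob Q m) / 4) by nra. lra.
Qed.

Lemma reachable_right q : reachable q -> 1 - beta <= q -> reachable ((q - 1 + beta) / beta).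
Proof.
  intros [Q [m [HQ [HPQ [Hm ->]]]]] Hq. destruct (rel_pos_spec Q m HQ) as [HL _].
  destruct (pinned_families Q m HQ HPQ Hm) as [[H _]|[_ Hfam]]; [lra|].
  replace ((rel_pos Q m - 1 + beta) / beta)
    with ((p - (snd (bob Q m) - beta * lenB (bob Q m))) / (beta * lenB (bob Q m)))
    by (unfold rel_pos, lenB in *; field; lra).
  apply Hfam. split; [|lra]. assert (0 <= (1 - 3 * beta) * lenB (bob Q m) / 4) by nra. lra.
Qed.

Definition spread : R := (1 - 3 * beta) / (4 * beta).

Lemma spread_pos : 0 < spread.
Proof. unfold spread. apply Rdiv_lt_0_compat; lra. Qed.

Lemma reachable_base : exists u, forall q, u <= q <= u + spread -> reachable q.
Proof.
  assert (HPn : agree P P n) by apply agree_refl.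
  set (L := lenB (bob P n)). set (delta := (1 - 3 * beta) * L / 4).
  destruct (rel_pos_spec P n HP) as [HL _]. fold L in HL.
  assert (Hfam : forall t0, (forall t, t0 <= t <= t0 + delta -> reachable ((p - t) / (beta * L))) ->
            exists u, forall q, u <= q <= u + spread -> reachable q).
  { intros t0 Ht0. exists ((p - t0 - delta) / (beta * L)). intros q Hq.
    assert (HbL : 0 < beta * L) by nra.
    replace q with ((p - (p - beta * L * q)) / (beta * L)) by (field; lra).
    apply Ht0.
    assert (Hs : spread * (beta * L) = delta) by (unfold spread, delta; field; lra).
    assert (Hu : (p - t0 - delta) / (beta * L) * (beta * L) = p - t0 - delta) by (field; lra).
    destruct Hq as [Hq1 Hq2]. split; nra. }
  destruct (pinned_families P n HP HPn (le_n n)) as [[_ H]|[_ H]];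
    [apply (Hfam (fst (bob P n))) | apply (Hfam (snd (bob P n) - beta * L - delta))];
    intros t Ht; apply H; unfold delta, L in *; lra.
Qed.

Lemma reachable_grow u w : 0 <= w -> (forall q, u <= q <= u + w -> reachable q) ->
  exists u', forall q, u' <= q <= u' + w / beta -> reachable q.
Proof.
  intros Hw Hr.
  assert (Hscale : forall x, beta * (x / beta) = x) by (intros x; field; lra).
  pose proof (Hscale w) as Hsw.
  destruct (Rle_or_lt (u + w) beta) as [Hl|Hl]; [|destruct (Rle_or_lt (1 - beta) u) as [Hh|Hh]].
  - exists (u / beta). intros q Hq. pose proof (Hscale u).
    replace q with (beta * q / beta) by (field; lra).
    apply reachable_left; [apply Hr|]; nra.
  - exists ((u - 1 + beta) / beta). intros q Hq. pose proof (Hscale (u - 1 + beta)).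
    replace q with ((beta * q + 1 - beta - 1 + beta) / beta) by (field; lra).
    apply reachable_right; [apply Hr|]; nra.
  - (* the interval then meets the forbidden middle [(beta, 1 - beta)] *)
    exfalso. apply (reachable_not_middle (Rmax u (Rmin (u + w) (1/2)))).
    + apply Hr. split; [apply Rmax_l|]. apply Rmax_lub; [lra | apply Rmin_l].
    + split.
      * destruct (Rlt_or_le beta u); [eapply Rlt_le_trans; [|apply Rmax_l]; lra|].
        eapply Rlt_le_trans; [|apply Rmax_r]. apply Rmin_glb_lt; lra.
      * apply Rmax_lub_lt; [lra|]. eapply Rle_lt_trans; [apply Rmin_r|]. lra.
Qed.

Lemma reachable_interval k : exists u, forall q, u <= q <= u + spread / beta ^ k -> reachable q.
Proof.
  induction k as [|k [u Hu]].
  - destruct reachable_base as [u Hu]. exists u. intros q Hq. apply Hu. simpl in Hq. lra.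
  - destruct (reachable_grow u (spread / beta ^ k)) as [u' Hu']; [|exact Hu|].
    + apply Rlt_le, Rdiv_lt_0_compat; [apply spread_pos | apply pow_lt; lra].
    + exists u'. intros q Hq. apply Hu'.
      replace (spread / beta ^ k / beta) with (spread / beta ^ S k)
        by (simpl; field; split; [apply pow_nonzero|]; lra).
      exact Hq.
Qed.

Lemma pinned_absurd : False.
Proof.
  pose proof spread_pos as Hs.
  destruct (pow_lt_1_zero beta) with (y := spread) as [N HN];
    [rewrite Rabs_pos_eq; lra | exact Hs|].
  specialize (HN N (le_n N)). rewrite Rabs_pos_eq in HN by (apply pow_le; lra).
  destruct (reachable_interval N) as [u Hu].
  assert (Hpow : 0 < beta ^ N) by (apply pow_lt; lra).
  assert (Hw : 0 < spread / beta ^ N) by (apply Rdiv_lt_0_compat; lra).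
  pose proof (reachable_unit u (Hu u ltac:(lra))).
  pose proof (reachable_unit _ (Hu (u + spread / beta ^ N) ltac:(lra))).
  assert (Hmul : spread / beta ^ N * beta ^ N = spread) by (field; lra).
  nra.
Qed.

End Pinned.

Lemma sigma_play_split P n : sigma_play P ->
  exists Q m, (n < m)%nat /\ sigma_play Q /\ agree P Q n /\ disjointB (bob P m) (bob Q m).
Proof.
  intros HP. destruct (legal_outcome_exists beta P (proj1 HP)) as [p Hp].
  destruct (classic (exists Q, sigma_play Q /\ agree P Q n /\ ~ outcome Q p))
    as [[Q [HQ [HPQ HQp]]]|Hnone].
  - apply not_all_ex_not in HQp. destruct HQp as [m0 Hm0].
    destruct (legal_eventually_disjoint beta P (proj1 HP) (proj1 beta_range) ltac:(lra)
                p (bob Q m0) Hp Hm0) as [N HN].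
    set (m := Nat.max (Nat.max N m0) (S n)).
    exists Q, m. split; [lia|]. split; [exact HQ|]. split; [exact HPQ|].
    intros x HxP HxQ. apply (HN m ltac:(lia) x HxP).
    apply (legal_bob_sub beta Q (proj1 HQ) m0 m x); [lia | exact HxQ].
  - exfalso. apply (pinned_absurd P HP n p). intros Q HQ HPQ.
    apply NNPP. intros HQp. apply Hnone. exists Q. auto.
Qed.

End AliceStrategy.

Lemma Alice_not_winning beta S :
  0 < beta < 1/3 -> Bernstein S -> ~ Alice_has_winning_strategy beta S.
Proof.
  intros Hb [_ Hnot_inside] [sigma [Hsigma Hwin]].
  destruct (good_outcomes_perfect beta (sigma_play beta sigma) (fun P HP => proj1 HP)
              (sigma_play_closed beta sigma) (sigma_play_inhabited beta Hb sigma Hsigma)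
              (sigma_play_split beta Hb sigma Hsigma)) as [C [HC [HCu HCout]]].
  apply (Hnot_inside C HC HCu). intros x Cx.
  destruct (HCout x Cx) as [Q [[HQl HQf] HQx]].
  destruct (Hwin (bob Q) (alice Q) (fun k => proj1 (HQl k)) HQf) as [y [Sy HQy]].
  rewrite (legal_outcome_unique beta Q HQl ltac:(lra) ltac:(lra) x y HQx HQy). exact Sy.
Qed.

Theorem theorem2 (beta : R) (S : R -> Prop) :
  0 < beta < 1/3 -> Bernstein S ->
  ~ Alice_has_winning_strategy beta S /\ ~ Bob_has_winning_strategy beta S.
Proof.
  intros Hb HS. split; [apply Alice_not_winning | apply Bob_not_winning]; assumption.
Qed.
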